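(* There exist a noisy discrete memoryless classical channel $N_n$ and a perfect $d$-level quantum channel $Q_p$ (for some $d\ge 1$) such that the one-shot zero-error classical capacity of the parallel use of $N_n$ and $Q_p$ strictly exceeds the product $\mathfrak{C}_0(N_n)\cdot \mathfrak{C}_0(Q_p)=\alpha(G(N_n))\cdot d$ of their individual one-shot zero-error classical capacities.
   Context: A discrete memoryless classical channel $N$ has a finite input alphabet $\mathcal{X}$, a finite output alphabet $\mathcal{Y}$ and conditional probabilities $P(y|x)$ with $\sum_{y}P(y|x)=1$ for each $x$. Let $\Gamma(x)=\{y: P(y|x)>0\}$. Distinct inputs $x,x'$ are confusable if $\Gamma(x)\cap\Gamma(x')\neq\varnothing$. The confusability graph $G(N)$ has vertex set $\mathcal{X}$, with an edge between distinct confusable inputs. The one-shot zero-error classical capacity of $N$ is $\mathfrak{C}_0(N)=\alpha(G(N))$, the independence number, i.e. the maximum number of messages that can be sent with zero error in one use (capacity is measured as a number of messages, not its logarithm). A perfect $d$-level quantum channel is the identity map on density operators on $\mathbb{C}^d$; its one-shot zero-error classical capacity is $d$. The one-shot zero-error classical capacity of the parallel (single, simultaneous) use of $N$ and a perfect $d$-level quantum channel is the largest integer $M$ for which there exist, for each message $m\in\{1,\dots,M\}$, a classical input $x_m\in\mathcal{X}$ and a quantum state $\rho_m$ on $\mathbb{C}^d$, and, for each output $y\in\mathcal{Y}$, a measurement (POVM) $\{E^{(y)}_{m'}\}_{m'=1}^M$ on $\mathbb{C}^d$, such that the receiver, seeing output $y$ of $N$ on input $x_m$ and measuring $\rho_m$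 with $\{E^{(y)}_{m'}\}$, obtains outcome $m$ with probability one, i.e. $\sum_{y}P(y|x_m)\,\mathrm{Tr}(E^{(y)}_{m}\rho_m)=1$ for every $m$. *)

(* Complex scalars are modelled by algC (algebraic complex
   numbers, a numClosedFieldType); channel probabilities are taken in algC too
   (they are required to be real and nonnegative via the order of algC). *)
From HB Require Import structures.
From mathcomp Require Import all_boot all_order all_algebra all_field.
Set Implicit Arguments.
Unset Strict Implicit.
Unset Printing Implicit Defensive.
Import Order.TTheory GRing.Theory Num.Theory.
Local Open Scope ring_scope.

Record cchannel (X Y : finType) := CChannel {
  cprob : X -> Y -> algC;
  cprob_ge0 : forall x y, 0 <= cprob x y;
  cprob_sum1 : forall x, \sum_(y : Y) cprob x y = 1
}.

Definition noisy (X Y : finType) (N : cchannel X Y) : Prop :=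
  exists x y, 0 < cprob N x y /\ cprob N x y < 1.

Definition Gamma (X Y : finType) (N : cchannel X Y) (x : X) : {set Y} :=
  [set y | 0 < cprob N x y].

Definition confusable (X Y : finType) (N : cchannel X Y) : rel X :=
  fun x x' => (x != x') && (Gamma N x :&: Gamma N x' != set0).

Definition independent_set (X : finType) (e : rel X) (S : {set X}) : bool :=
  [forall x in S, forall x' in S, ~~ e x x'].

Definition independence_number (X : finType) (e : rel X) : nat :=
  \max_(S : {set X} | independent_set e S) #|S|.

Definition C0 (X Y : finType) (N : cchannel X Y) : nat :=
  independence_number (confusable N).

Definition adjmx (m n : nat) (A : 'M[algC]_(m, n)) : 'M[algC]_(n, m) :=
  (map_mx Num.conj A)^T.

Definition hermitian_mx (d : nat) (A : 'M[algC]_d) : Prop := adjmx A = A.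

Definition psd_mx (d : nat) (A : 'M[algC]_d) : Prop :=
  hermitian_mx A /\ forall v : 'cV[algC]_d, 0 <= (adjmx v *m A *m v) 0 0.

Definition density_mx (d : nat) (rho : 'M[algC]_d) : Prop :=
  psd_mx rho /\ \tr rho = 1.

Definition povm (d M : nat) (E : 'I_M -> 'M[algC]_d) : Prop :=
  (forall m, psd_mx (E m)) /\ \sum_(m < M) E m = 1%:M.

(* A zero-error code with M messages for the parallel (single, simultaneous)
   use of N and the perfect d-level quantum channel (identity map):
   classical inputs x_m, states rho_m, and for each output y a POVM E^(y),
   with sum_y P(y|x_m) Tr(E^(y)_m rho_m) = 1 for every message m. *)
Definition zero_error_code_parallel (X Y : finType) (N : cchannel X Y)
    (d M : nat) : Prop :=
  exists (x : 'I_M -> X) (rho : 'I_M -> 'M[algC]_d)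
         (E : Y -> 'I_M -> 'M[algC]_d),
    (forall m, density_mx (rho m)) /\
    (forall y, povm (E y)) /\
    (forall m, \sum_(y : Y) cprob N (x m) y * \tr (E y m *m rho m) = 1).

From mathcomp Require Import all_boot all_order all_algebra all_field.
From mathcomp Require Import zify.
Set Implicit Arguments.
Unset Strict Implicit.
Unset Printing Implicit Defensive.
Import Order.TTheory GRing.Theory Num.Theory.
Local Open Scope ring_scope.

(* The classical channel is built from the 18-vector Kochen-Specker set of
   Cabello, Estebaranz and Garcia-Alcaine: 18 vectors of C^4 forming 9
   orthogonal bases, each vector lying in exactly two of them.  On input a
   vector, the channel outputs one of its two bases uniformly at random.
   Pairwise non-confusable inputs have disjoint pairs of bases among the 9,
   so there are at most 4 of them and C0 <= 4.  Used in
   parallel with a perfect 4-level quantum channel, the sender also transmits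
   the vector itself as a pure state; once the receiver knows the basis, a
   measurement in that basis identifies the vector with certainty, so all
   18 > 4 * 4 inputs can be sent with zero error. *)

Section ZeroErrorCapacityBound.

Variables (X Y : finType) (N : cchannel X Y).

Lemma independent_Gamma_disjoint (S : {set X}) x x' y :
    independent_set (confusable N) S -> x \in S -> x' \in S ->
  y \in Gamma N x -> y \in Gamma N x' -> x = x'.
Proof.
move=> /forallP indS Sx Sx' Gx Gx'; apply/eqP/negPn/negP => neq_xx'.
move: (indS x); rewrite Sx => /forallP/(_ x'); rewrite Sx' /confusable neq_xx' /=.
by case/negP; apply/set0Pn; exists y; rewrite inE Gx Gx'.
Qed.

Lemma C0_mul_le_card (k : nat) :
  (forall x, k <= #|Gamma N x|)%N -> (C0 N * k <= #|Y|)%N.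
Proof.
move=> Gamma_ge; apply: (big_ind (fun m => m * k <= #|Y|)%N) => //.
  by move=> a b ha hb; rewrite maxnMl geq_max ha hb.
move=> S indS.
have fiber_le1 y : (\sum_(x in S) (y \in Gamma N x) <= 1)%N.
  rewrite -big_mkcondr sum1_card leqNgt; apply/negP => /card_gt1P [x [x' []]].
  move=> /andP [Sx Gx] /andP [Sx' Gx'] /eqP; apply.
  exact: independent_Gamma_disjoint indS Sx Sx' Gx Gx'.
rewrite -sum_nat_const (@leq_trans (\sum_(x in S) #|Gamma N x|)) ?leq_sum //.
under eq_bigr do rewrite -sum1_card big_mkcond /=.
rewrite exchange_big /= (@leq_trans (\sum_(y : Y) 1)) //.
  by apply: leq_sum => y _; exact: fiber_le1.
by rewrite sum1dep_card cardsT.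
Qed.

End ZeroErrorCapacityBound.

Section IncidenceChannel.

Variables (X Y : finType) (adj : X -> {set Y}) (k : nat).
Hypotheses (k_gt0 : (0 < k)%N) (card_adj : forall x, #|adj x| = k).

Definition incidence_prob (x : X) (y : Y) : algC := (y \in adj x)%:R / k%:R.

Lemma incidence_prob_ge0 x y : 0 <= incidence_prob x y.
Proof. by rewrite divr_ge0 ?ler0n. Qed.

Lemma incidence_prob_sum1 x : \sum_y incidence_prob x y = 1.
Proof.
rewrite -mulr_suml -natr_sum -big_mkcondr /= sum1_card card_adj.
by rewrite divff // pnatr_eq0 -lt0n.
Qed.

Definition incidence_channel := CChannel incidence_prob_ge0 incidence_prob_sum1.

Lemma Gamma_incidence x : Gamma incidence_channel x = adj x.
Proof.
apply/setP => y; rewrite inE /= /incidence_prob.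
by case: (y \in adj x); rewrite ?mul0r ?ltxx // mul1r invr_gt0 ltr0n.
Qed.

Lemma incidence_channel_noisy (x : X) : (1 < k)%N -> noisy incidence_channel.
Proof.
move=> k_gt1; have /card_gt0P [y adj_xy] : (0 < #|adj x|)%N by rewrite card_adj.
exists x, y; rewrite /= /incidence_prob adj_xy mul1r invr_gt0 ltr0n k_gt0.
by split=> //; rewrite invf_lt1 ?ltr0n // ltr1n.
Qed.

Lemma C0_incidence : (C0 incidence_channel * k <= #|Y|)%N.
Proof. by apply: C0_mul_le_card => x; rewrite Gamma_incidence card_adj. Qed.

End IncidenceChannel.

Lemma adjmxE m n (A : 'M[algC]_(m, n)) i j : adjmx A i j = (A j i)^*.
Proof. by rewrite !mxE. Qed.

Lemma adjmxK m n (A : 'M[algC]_(m, n)) : adjmx (adjmx A) = A.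
Proof. by apply/matrixP => i j; rewrite !adjmxE conjCK. Qed.

Lemma adjmxM m n p (A : 'M[algC]_(m, n)) (B : 'M[algC]_(n, p)) :
  adjmx (A *m B) = adjmx B *m adjmx A.
Proof. by rewrite /adjmx map_mxM trmx_mul. Qed.

Lemma adjmxZ m n a (A : 'M[algC]_(m, n)) : adjmx (a *: A) = a^* *: adjmx A.
Proof. by rewrite /adjmx map_mxZ linearZ. Qed.

Definition inner d (u v : 'cV[algC]_d) : algC := (adjmx u *m v) 0 0.

Lemma innerE d (u v : 'cV[algC]_d) : inner u v = \sum_i (u i 0)^* * v i 0.
Proof. by rewrite /inner mxE; under eq_bigr do rewrite adjmxE. Qed.

Lemma inner_conj d (u v : 'cV[algC]_d) : (inner u v)^* = inner v u.
Proof.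
rewrite !innerE rmorph_sum; apply: eq_bigr => i _.
by rewrite rmorphM /= conjCK mulrC.
Qed.

Lemma inner_ge0 d (v : 'cV[algC]_d) : 0 <= inner v v.
Proof. by rewrite innerE sumr_ge0 // => i _; rewrite mulrC mul_conjC_ge0. Qed.

Lemma adjmx_mul_col d (u v : 'cV[algC]_d) : adjmx u *m v = (inner u v)%:M.
Proof. by apply/matrixP => i j; rewrite !ord1 [RHS]mxE eqxx mulr1n. Qed.

Lemma psd_mx0 d : psd_mx (0 : 'M[algC]_d).
Proof.
split; first by apply/matrixP => i j; rewrite adjmxE !mxE rmorph0.
by move=> v; rewrite mulmx0 mul0mx mxE.
Qed.

Lemma psd_outer d (c : algC) (v : 'cV[algC]_d) :
  0 <= c -> psd_mx (c *: (v *m adjmx v)).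
Proof.
move=> c_ge0; split; first by rewrite /hermitian_mx adjmxZ adjmxM adjmxK geC0_conj.
move=> w; rewrite -scalemxAr -scalemxAl mxE mulmxA -(mulmxA (adjmx w *m v)).
rewrite !adjmx_mul_col -scalar_mxM mxE -(inner_conj v w) mulr1n.
by rewrite mulr_ge0 // mulrC mul_conjC_ge0.
Qed.

Definition proj_mx d (v : 'cV[algC]_d) : 'M[algC]_d :=
  (inner v v)^-1 *: (v *m adjmx v).

Section RankOneProjection.

Variables (d : nat) (v : 'cV[algC]_d).
Hypothesis v_neq0 : inner v v != 0.

Lemma proj_mx_density : density_mx (proj_mx v).
Proof.
split; first by apply: psd_outer; rewrite invr_ge0 inner_ge0.
by rewrite mxtraceZ mxtrace_mulC adjmx_mul_col mxtrace_scalar mulr1n mulVf.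
Qed.

Lemma proj_mx_idem : proj_mx v *m proj_mx v = proj_mx v.
Proof.
rewrite /proj_mx -scalemxAr -scalemxAl scalerA mulmxA -(mulmxA v).
by rewrite adjmx_mul_col mul_mx_scalar -scalemxAl scalerA -mulrA mulVf ?mulr1.
Qed.

End RankOneProjection.

Lemma sum_proj_mx_orthogonal d (v : 'I_d -> 'cV[algC]_d) :
    (forall k, inner (v k) (v k) != 0) ->
    (forall k l, k != l -> inner (v k) (v l) = 0) ->
  \sum_k proj_mx (v k) = 1%:M.
Proof.
move=> v_neq0 v_orth.
(* W = diag(1 / |v_k|^2) V^* is a left inverse of V, hence also a right
   inverse, and V W is the sum of the projections. *)
pose V : 'M[algC]_d := \matrix_(i, k) v k i 0.
pose W : 'M[algC]_d := \matrix_(k, i) ((inner (v k) (v k))^-1 * (v k i 0)^*).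
have WV : W *m V = 1%:M.
  apply/matrixP => k l; rewrite !mxE.
  under eq_bigr do rewrite !mxE -mulrA.
  rewrite -mulr_sumr -innerE.
  by have [->|/v_orth->] := eqVneq k l; rewrite ?mulVf ?mulr0.
apply/matrixP => i j; rewrite -(mulmx1C WV) summxE !mxE.
apply: eq_bigr => k _; rewrite !mxE big_ord1 adjmxE.
by rewrite mulrCA mulrA.
Qed.

Lemma cprob_eq0 (X Y : finType) (N : cchannel X Y) x y :
  y \notin Gamma N x -> cprob N x y = 0.
Proof.
by rewrite inE lt_neqAle cprob_ge0 andbT negbK => /eqP <-.
Qed.

Lemma projective_zero_error_code (X Y : finType) (N : cchannel X Y) d
    (P : X -> 'M[algC]_d) :
    (forall x, density_mx (P x)) -> (forall x, P x *m P x = P x) ->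
    (forall y, \sum_(x | y \in Gamma N x) P x = 1%:M) ->
  zero_error_code_parallel N d #|X|.
Proof.
move=> P_density P_idem P_resolution.
pose E y x := if y \in Gamma N x then P x else 0.
exists enum_val, (P \o enum_val), (fun y m => E y (enum_val m)).
split=> [m|]; first exact: P_density.
split=> [y|m].
  split=> [m|].
    by rewrite /E; case: ifP => _; [exact: (P_density _).1 | exact: psd_mx0].
  by rewrite -(big_enum_val (fun x => E y x)) -big_mkcond /= P_resolution.
rewrite -[RHS](cprob_sum1 N (enum_val m)); apply: eq_bigr => y _ /=.
rewrite /E; case: ifPn => [_|/cprob_eq0->]; last by rewrite mul0r.
by rewrite P_idem (P_density _).2 mulr1.
Qed.

Lemma sum_ord_foldr (R : nmodType) n (F : nat -> R) :
  \sum_(i < n) F i = foldr (fun i s => F i + s) 0 (iota 0 n).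
Proof. by rewrite -(big_mkord xpredT) unlock /index_iota subn0. Qed.

Lemma all_iota_ord n (p : pred nat) : all p (iota 0 n) -> forall i : 'I_n, p i.
Proof. by move=> /allP p_iota i; apply: p_iota; rewrite mem_iota /=. Qed.

Lemma has_iota_ord n (p : pred nat) : has p (iota 0 n) = [exists i : 'I_n, p i].
Proof.
apply/hasP/existsP => [[m] | [i p_i]]; last by exists (val i); rewrite ?mem_iota /=.
by rewrite mem_iota /= => m_lt_n p_m; exists (Ordinal m_lt_n).
Qed.

Lemma card_ord_count n (p : pred nat) :
  #|[set i : 'I_n | p i]| = count p (iota 0 n).
Proof.
by rewrite cardsE cardE /enum_mem size_filter -enumT -val_enum_ord count_map.
Qed.

(* The table is indexed by nat so that the checks below reduce under
   vm_compute, which cannot enumerate ordinals. *)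
Definition cabello_vectors : seq (seq int) :=
  [:: [:: 0;0;0;1]; [:: 0;0;1;0]; [:: 1;1;0;0]; [:: 1;-1;0;0]; [:: 0;1;0;0];
      [:: 1;0;1;0]; [:: 1;0;-1;0]; [:: 1;-1;1;-1]; [:: 1;-1;-1;1]; [:: 0;0;1;1];
      [:: 1;1;1;1]; [:: 0;1;0;-1]; [:: 1;0;0;1]; [:: 1;0;0;-1]; [:: 0;1;-1;0];
      [:: 1;1;-1;1]; [:: 1;1;1;-1]; [:: -1;1;1;1]]%Z.

Definition cabello_bases : seq (seq nat) :=
  [:: [:: 0;1;2;3]; [:: 0;4;5;6]; [:: 7;8;2;9]; [:: 7;10;6;11]; [:: 1;4;12;13];
      [:: 8;10;13;14]; [:: 15;16;3;9]; [:: 15;17;5;11]; [:: 16;17;12;14]]%N.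

Definition cabello_entry (x i : nat) : int :=
  nth 0 (nth [::] cabello_vectors x) i.

Definition cabello_member (y k : nat) : nat := nth 0%N (nth [::] cabello_bases y) k.

Definition cabello_dot (x x' : nat) : int :=
  foldr (fun i s => cabello_entry x i * cabello_entry x' i + s) 0 (iota 0 4).

Lemma cabello_members_bounded :
  all (fun y => all (fun k => cabello_member y k < 18)%N (iota 0 4)) (iota 0 9).
Proof. by vm_compute. Qed.

Lemma cabello_bases_orthogonal :
  all (fun y => all (fun k => all (fun l =>
         (k == l) || (cabello_dot (cabello_member y k) (cabello_member y l) == 0))
       (iota 0 4)) (iota 0 4)) (iota 0 9).
Proof. by vm_compute. Qed.

Lemma cabello_vectors_nonzero : all (fun x => cabello_dot x x != 0) (iota 0 18).
Proof. by vm_compute. Qed.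

Lemma cabello_incidence_two :
  all (fun x => count (fun y => has (fun k => cabello_member y k == x) (iota 0 4))
                  (iota 0 9) == 2)%N (iota 0 18).
Proof. by vm_compute. Qed.

Definition cabello_vec (x : 'I_18) : 'cV[algC]_4 := \col_i (cabello_entry x i)%:~R.

Definition cabello_basis (y : 'I_9) (k : 'I_4) : 'I_18 := inord (cabello_member y k).

Definition cabello_adj (x : 'I_18) : {set 'I_9} :=
  [set y | x \in [set cabello_basis y k | k : 'I_4]].

Lemma inner_cabello_vec x x' :
  inner (cabello_vec x) (cabello_vec x') = (cabello_dot x x')%:~R.
Proof.
rewrite innerE /cabello_dot -sum_ord_foldr rmorph_sum; apply: eq_bigr => i _.
by rewrite !mxE rmorph_int /= intrM.
Qed.

Lemma val_cabello_basis y k : val (cabello_basis y k) = cabello_member y k.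
Proof. exact/inordK/(all_iota_ord (all_iota_ord cabello_members_bounded y)). Qed.

Lemma cabello_vec_neq0 x : inner (cabello_vec x) (cabello_vec x) != 0.
Proof.
by rewrite inner_cabello_vec intr_eq0 (all_iota_ord cabello_vectors_nonzero).
Qed.

Lemma cabello_basis_orthogonal y k l : k != l ->
  inner (cabello_vec (cabello_basis y k)) (cabello_vec (cabello_basis y l)) = 0.
Proof.
move=> neq_kl; rewrite inner_cabello_vec !val_cabello_basis.
have /all_iota_ord/(_ k)/all_iota_ord/(_ l) := all_iota_ord cabello_bases_orthogonal y.
by rewrite -val_eqE in neq_kl; rewrite (negPf neq_kl) => /eqP->.
Qed.

Lemma cabello_basis_inj y : injective (cabello_basis y).
Proof.
move=> k l eq_kl; apply/eqP/negPn/negP => /(cabello_basis_orthogonal y).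
by rewrite eq_kl; apply/eqP; exact: cabello_vec_neq0.
Qed.

Lemma card_cabello_adj x : #|cabello_adj x| = 2%N.
Proof.
rewrite -[RHS](eqP (all_iota_ord cabello_incidence_two x)) -card_ord_count.
apply: eq_card => y; rewrite !inE has_iota_ord.
apply/imsetP/existsP => [[k _ ->] | [k /eqP eq_kx]]; exists k => //.
  by rewrite val_cabello_basis.
by apply: val_inj; rewrite val_cabello_basis.
Qed.

Definition cabello_channel := incidence_channel (isT : (0 < 2)%N) card_cabello_adj.

Lemma cabello_resolution y :
  \sum_(x | y \in Gamma cabello_channel x) proj_mx (cabello_vec x) = 1%:M.
Proof.
under eq_bigl do rewrite Gamma_incidence inE.
rewrite big_imset /=; last by move=> k l _ _; exact: cabello_basis_inj.
apply: sum_proj_mx_orthogonal => [k | k l]; first exact: cabello_vec_neq0.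
exact: cabello_basis_orthogonal.
Qed.

Theorem theorem1 :
  exists (X Y : finType) (N : cchannel X Y) (d : nat),
    noisy N /\ (1 <= d)%N /\
    exists M : nat, (C0 N * d < M)%N /\ zero_error_code_parallel N d M.
Proof.
exists 'I_18, 'I_9, cabello_channel, 4%N.
split; first exact: incidence_channel_noisy ord0 _.
split=> //; exists #|'I_18|; split.
  have : (C0 cabello_channel * 2 <= #|'I_9|)%N by exact: C0_incidence.
  (* [set] merges two elaborations of [C0 cabello_channel] that lia would
     treat as distinct atoms. *)
  by rewrite !card_ord; set c := C0 cabello_channel; lia.
apply: projective_zero_error_code => [x | x | y]; last exact: cabello_resolution.
  exact: proj_mx_density (cabello_vec_neq0 x).
exact: proj_mx_idem (cabello_vec_neq0 x).
Qed.
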